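(* Let $\mathcal A$ be an NFA and let $R$ be a strict partial order on its states with $R\subseteq\ \subseteq^{\mathrm{fw}}$. Then $P(\mathrm{id},R)$ is good for pruning on NFA: $\mathcal L(\mathrm{Prune}(\mathcal A,P(\mathrm{id},R)))=\mathcal L(\mathcal A)$. In particular this holds for $R$ the strict part of $\subseteq^{\mathrm{fw}}$.
   Context: An NFA is $\mathcal A=(\Sigma,Q,I,F,\delta)$, $\delta\subseteq Q\times\Sigma\times Q$ (assumed forward and backward complete); its language is the set of finite words $w$ having a finite trace on $w$ starting in $I$ and ending in $F$ (the empty trace on $\varepsilon$ is a single state). Forward finite trace inclusion: $p\subseteq^{\mathrm{fw}}q$ iff for every finite word $w$, if there is a finite $w$-trace from $p$ ending in $F$ then there is a finite $w$-trace from $q$ ending in $F$. Strict part: $p\subseteq q$ and not $q\subseteq p$. $\mathrm{Prune}(\mathcal A,P)$ has transition set $\{t\in\delta:\nexists t'\in\delta,(t,t')\in P\}$; $P(R_b,R_f)=\{((p,\sigma,r),(p',\sigma,r'))\in\delta\times\delta:p\,R_b\,p',\ r\,R_f\,r'\}$; $\mathrm{id}$ is the identity relation. *)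

From mathcomp Require Import all_boot.
Set Implicit Arguments. Unset Strict Implicit. Unset Printing Implicit Defensive.

Record NFA (Sigma : Type) (Q : finType) := mkNFA {
  init  : Q -> Prop;
  final : Q -> Prop;
  delta : Q -> Sigma -> Q -> Prop }.

Definition transition (Sigma : Type) (Q : finType) := (Q * Sigma * Q)%type.

Definition forward_complete Sigma Q (A : NFA Sigma Q) : Prop :=
  forall (p : Q) (a : Sigma), exists r, delta A p a r.
Definition backward_complete Sigma Q (A : NFA Sigma Q) : Prop :=
  forall (r : Q) (a : Sigma), exists p, delta A p a r.

(* trace A q w qs : the sequence q :: qs is a finite w-trace of A starting at q
   (qs lists the states after each letter; the trace ends in last q qs). *)
Fixpoint trace Sigma Q (A : NFA Sigma Q) (q : Q) (w : seq Sigma) (qs : seq Q)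
  : Prop :=
  match w, qs with
  | [::], [::] => True
  | a :: w', q' :: qs' => delta A q a q' /\ trace A q' w' qs'
  | _, _ => False
  end.

Definition accepts_from Sigma Q (A : NFA Sigma Q) (q : Q) (w : seq Sigma) : Prop :=
  exists qs, trace A q w qs /\ final A (last q qs).

Definition in_lang Sigma Q (A : NFA Sigma Q) (w : seq Sigma) : Prop :=
  exists q, init A q /\ accepts_from A q w.

Definition same_lang Sigma Q (A B : NFA Sigma Q) : Prop :=
  forall w, in_lang A w <-> in_lang B w.

Definition fw_incl Sigma Q (A : NFA Sigma Q) (p q : Q) : Prop :=
  forall w, accepts_from A p w -> accepts_from A q w.

Definition strict_part (T : Type) (R : T -> T -> Prop) (p q : T) : Prop :=
  R p q /\ ~ R q p.

Definition strict_partial_order (T : Type) (R : T -> T -> Prop) : Prop :=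
  (forall x, ~ R x x) /\ (forall x y z, R x y -> R y z -> R x z).

Definition Prel Sigma Q (A : NFA Sigma Q) (Rb Rf : Q -> Q -> Prop)
  (t t' : transition Sigma Q) : Prop :=
  match t, t' with
  | (p, s, r), (p', s', r') =>
      delta A p s r /\ delta A p' s' r' /\ s = s' /\ Rb p p' /\ Rf r r'
  end.

Definition Prune Sigma Q (A : NFA Sigma Q)
  (P : transition Sigma Q -> transition Sigma Q -> Prop) : NFA Sigma Q :=
  mkNFA (init A) (final A)
    (fun p a r => delta A p a r /\
       ~ (exists t' : transition Sigma Q,
            delta A t'.1.1 t'.1.2 t'.2 /\ P (p, a, r) t')).

(* Take an accepting trace of A and, letter by letter, replace the next state
   by an R-maximal successor that still accepts the rest of the word; such a
   successor exists because R is well-founded on the finite state space and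
   R-larger states accept more words.  The transition to an R-maximal
   successor is never pruned by P(id, R), so the rebuilt trace survives. *)
From mathcomp Require Import all_boot.
From mathcomp Require Import boolp.

Set Implicit Arguments. Unset Strict Implicit. Unset Printing Implicit Defensive.

Lemma strict_part_spo (T : Type) (R : T -> T -> Prop) :
  (forall x y z, R x y -> R y z -> R x z) -> strict_partial_order (strict_part R).
Proof.
move=> trR; split=> [x [Rxx nRxx] //|x y z [Rxy nRyx] [Ryz nRzy]].
split; first exact: trR Rxy Ryz.
by move=> Rzx; apply: nRzy; apply: trR Rzx Rxy.
Qed.

Section MaximalElements.
Variables (T : finType) (R : T -> T -> Prop).
Hypothesis spoR : strict_partial_order R.

Definition up_card (x : T) : nat := #|[pred y | `[< R x y >]]|.

Lemma up_card_lt x y : R x y -> up_card y < up_card x.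
Proof.
move=> Rxy; apply: proper_card; apply/properP; split.
  by apply/subsetP => z; rewrite !inE => /asboolP Ryz; apply/asboolP;
     apply: (proj2 spoR) Rxy Ryz.
exists y; first by rewrite inE; apply/asboolP.
by rewrite inE; apply/asboolP; apply: (proj1 spoR).
Qed.

Lemma exists_maximal (P : T -> Prop) x :
  P x -> exists2 y, P y & forall z, P z -> ~ R y z.
Proof.
move: {2}(up_card x).+1 (ltnSn (up_card x)) => n; elim: n x => [//|n IHn] x.
rewrite ltnS => le_x_n Px.
have [[z [Pz Rxz]]|no_up] := pselect (exists z, P z /\ R x z).
  exact: IHn (leq_trans (up_card_lt Rxz) le_x_n) Pz.
by exists x => // z Pz Rxz; apply: no_up; exists z.
Qed.

End MaximalElements.

Section Pruning.
Variables (Sigma : Type) (Q : finType) (A : NFA Sigma Q).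

Lemma fw_incl_trans p q r : fw_incl A p q -> fw_incl A q r -> fw_incl A p r.
Proof. by move=> pq qr w /pq /qr. Qed.

Lemma accepts_from_Prune P p w : accepts_from (Prune A P) p w -> accepts_from A p w.
Proof.
move=> [qs [tr_qs fin_qs]]; exists qs; split=> //.
by elim: w p qs tr_qs {fin_qs} => [|a w IHw] p [|r qs] //= [[pr _] /IHw].
Qed.

Variable R : Q -> Q -> Prop.
Hypotheses (spoR : strict_partial_order R) (R_fw : forall p q, R p q -> fw_incl A p q).

Lemma maximal_accepting_succ p a r w :
  delta A p a r -> accepts_from A r w ->
  exists r', [/\ delta A p a r', accepts_from A r' w &
                 forall r'', delta A p a r'' -> ~ R r' r''].
Proof.
move=> par acc_r.
have [r' [par' acc_r'] max_r'] :=
  exists_maximal spoR (P := fun r => delta A p a r /\ accepts_from A r w)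
                 (conj par acc_r).
exists r'; split=> // r'' par'' Rr'r''.
exact: max_r' (conj par'' (R_fw Rr'r'' acc_r')) Rr'r''.
Qed.

Lemma accepts_from_Prune_idR p w :
  accepts_from A p w -> accepts_from (Prune A (Prel A eq R)) p w.
Proof.
elim: w p => [|a w IHw] p [[|r qs] [//= tr_qs fin_qs]]; first by exists [::].
case: tr_qs => par tr_qs.
have [r' [par' acc_r' max_r']] :=
  maximal_accepting_succ par (ex_intro _ qs (conj tr_qs fin_qs)).
have [qs' [tr_qs' fin_qs']] := IHw _ acc_r'.
exists (r' :: qs'); split=> //=; do 2!split=> //.
move=> [[[p' a'] r''] [_ [_ [par'' [eq_a [eq_p Rr'r'']]]]]]; subst a' p'.
exact: max_r' par'' Rr'r''.
Qed.

Lemma same_lang_Prune_idR : same_lang (Prune A (Prel A eq R)) A.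
Proof.
move=> w; split=> -[q [init_q acc_q]]; exists q; split=> //.
  exact: accepts_from_Prune acc_q.
exact: accepts_from_Prune_idR.
Qed.

End Pruning.

Theorem theorem5p6 (Sigma : Type) (Q : finType) (A : NFA Sigma Q)
  (Hfw : forward_complete A) (Hbw : backward_complete A) :
  (forall R : Q -> Q -> Prop,
     strict_partial_order R ->
     (forall p q, R p q -> fw_incl A p q) ->
     same_lang (Prune A (Prel A eq R)) A)
  /\ same_lang (Prune A (Prel A eq (strict_part (fw_incl A)))) A.
Proof.
split=> [R spoR R_fw|]; first exact: same_lang_Prune_idR.
apply: same_lang_Prune_idR; last by move=> p q [].
exact/strict_part_spo/fw_incl_trans.
Qed.
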